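(* Let $G$ be a connected graph with adjacency matrix $A$, $d=A\mathbf 1$, $D=\mathrm{diag}(d)$, $P=D^{-1}A$, let $e=(i,j)$, $i\ne j$, $a_{ij}>0$, be an edge that is not a cut-edge, $v=e_i-e_j$, $\widehat A=A+a_{ij}vv^T$, $\widehat P=D^{-1}\widehat A$ and $c(e)=K(\widehat P)-K(P)$. Define \[ W^{-1}=I-D^{-1/2}AD^{-1/2}+\frac{1}{\|d\|_1}D^{1/2}\mathbf 1\mathbf 1^TD^{1/2},\qquad \widehat W^{-1}=W^{-1}-a_{ij}D^{-1/2}vv^TD^{-1/2} \] (both matrices are invertible). Then \[ c(e)=a_{ij}\,v^TD^{-1/2}W\widehat WD^{-1/2}v, \] and moreover $1-a_{ij}v^TD^{-1/2}WD^{-1/2}v\ne 0$ and $\widehat W=W-\tau a_{ij}WD^{-1/2}vv^TD^{-1/2}W$ with $\tau=-1/(1-a_{ij}v^TD^{-1/2}WD^{-1/2}v)$.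
   Context: Graphs are undirected and possibly weighted on vertex set $\{1,\dots,n\}$, with symmetric nonnegative adjacency matrix $A=(a_{k\ell})$; $d=A\mathbf 1$ (all entries assumed positive); $\|d\|_1=\sum_k d_k$; $D^{\pm1/2}=\mathrm{diag}(d_k^{\pm1/2})$; $e_k$ is the $k$-th column of the identity and $\mathbf 1$ the all-ones vector. For an irreducible row-stochastic matrix $Q$ with stationary vector $\pi$, the Kemeny constant is $K(Q)=\sum_j\pi_j m_{kj}$, where $m_{kj}$ is the expected first passage time from $k$ to $j$ ($m_{kk}=0$), independent of $k$; equivalently $K(Q)=\sum_{\ell=2}^n 1/(1-\lambda_\ell)$, where $1=\lambda_1,\lambda_2,\dots,\lambda_n$ are the eigenvalues of $Q$. The edge $e$ is a cut-edge if the graph obtained by deleting $e$ is disconnected. *)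

(* Scalars: an arbitrary real closed field R (e.g. the reals);
   eigenvalues are taken in its algebraic closure R[i]. *)
From HB Require Import structures.
From mathcomp Require Import all_boot all_order all_algebra.
From mathcomp Require Import complex.
Set Implicit Arguments. Unset Strict Implicit. Unset Printing Implicit Defensive.
Import Order.TTheory GRing.Theory Num.Theory.
Local Open Scope ring_scope.

Section Defs.
Variable R : rcfType.
Variable n : nat.

Definition cmx (Q : 'M[R]_n) : 'M[R[i]]_n := map_mx (fun x => Complex x 0) Q.

(* the eigenvalues of Q, listed with algebraic multiplicity
   (roots of the characteristic polynomial in R[i]) *)
Definition eigenvalues (Q : 'M[R]_n) : seq R[i] :=
  sval (closed_field_poly_normal (char_poly (cmx Q))).

(* Kemeny constant: K(Q) = sum_{l >= 2} 1/(1 - lambda_l), where lambda_1 = 1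
   is removed (one copy) from the list of eigenvalues. *)
Definition Kemeny (Q : 'M[R]_n) : R[i] :=
  \sum_(z <- rem 1 (eigenvalues Q)) (1 - z)^-1.

Definition ones : 'cV[R]_n := const_mx 1.
Definition degv (A : 'M[R]_n) : 'cV[R]_n := A *m ones.
Definition Dmat (A : 'M[R]_n) : 'M[R]_n := diag_mx (\row_k degv A k 0).
Definition Dinv (A : 'M[R]_n) : 'M[R]_n := diag_mx (\row_k (degv A k 0)^-1).
Definition Dhalf (A : 'M[R]_n) : 'M[R]_n := diag_mx (\row_k Num.sqrt (degv A k 0)).
Definition Dmhalf (A : 'M[R]_n) : 'M[R]_n :=
  diag_mx (\row_k (Num.sqrt (degv A k 0))^-1).
Definition dnorm1 (A : 'M[R]_n) : R := \sum_k degv A k 0.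

Definition adjrel (A : 'M[R]_n) : rel 'I_n := fun k l => 0 < A k l.
Definition connected_graph (A : 'M[R]_n) : Prop :=
  forall k l : 'I_n, connect (adjrel A) k l.

Definition del_edge_rel (A : 'M[R]_n) (i j : 'I_n) : rel 'I_n :=
  fun k l => (0 < A k l) && ~~ (((k == i) && (l == j)) || ((k == j) && (l == i))).
Definition cut_edge (A : 'M[R]_n) (i j : 'I_n) : Prop :=
  ~ (forall k l : 'I_n, connect (del_edge_rel A i j) k l).

Definition evec (i j : 'I_n) : 'cV[R]_n :=
  \col_k ((k == i)%:R - (k == j)%:R).

Definition Winv (A : 'M[R]_n) : 'M[R]_n :=
  1%:M - Dmhalf A *m A *m Dmhalf A
  + (dnorm1 A)^-1 *: (Dhalf A *m ones *m ones^T *m Dhalf A).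
Definition What_inv (A : 'M[R]_n) (i j : 'I_n) : 'M[R]_n :=
  Winv A - A i j *: (Dmhalf A *m evec i j *m (evec i j)^T *m Dmhalf A).

End Defs.

Arguments evec {R n} i j.
Arguments ones {R n}.

From HB Require Import structures.
From mathcomp Require Import all_boot all_order all_algebra.
From mathcomp Require Import complex sesquilinear spectral.
From mathcomp Require Import ring.
Set Implicit Arguments. Unset Strict Implicit. Unset Printing Implicit Defensive.
Import Order.TTheory GRing.Theory Num.Theory.
Local Open Scope ring_scope.

(* Write S := D^-1/2 A D^-1/2 and y := D^1/2 1, so that S y = y, y^T y = ||d||_1
   and W^-1 = I - M with M := S - y y^T / ||d||_1 symmetric.  Since P is similar to
   S and M is the Brauer deflation of S along y, the spectrum of M is that of P with
   the eigenvalue 1 replaced by 0; diagonalizing M gives tr W = 1 + K(P).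
   W^-1 is invertible: if r W^-1 = 0 then r y = 0 and r S = r, so r D^-1/2 is
   harmonic, hence constant on the connected graph, and r is a multiple of y^T.
   Adding a_ij v v^T trades the edge e for loops at i and j, which keeps the
   degrees, and the graph stays connected because e is not a cut-edge; so
   \hat W^-1 is the matrix W^-1 of \hat A and K(\hat P) = tr \hat W - 1.  Finally
   \hat W^-1 is a rank-one update of W^-1, and both the formula for \hat W and
   tr \hat W - tr W are instances of Sherman-Morrison. *)

Lemma trmx_sym_entry (T : Type) (m : nat) (M : 'M[T]_m) k l :
  M^T = M -> M k l = M l k.
Proof. by move/matrixP/(_ l k); rewrite mxE. Qed.

Section DegreeScaling.
Variables (R : rcfType) (n : nat) (B : 'M[R]_n).

Definition sqrtdeg : 'cV[R]_n := \col_k Num.sqrt (degv B k 0).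

Definition normadj : 'M[R]_n := Dmhalf B *m B *m Dmhalf B.

Lemma Dhalf_ones : Dhalf B *m ones = sqrtdeg.
Proof. by apply/colP => k; rewrite mul_diag_mx !mxE mulr1. Qed.

Lemma WinvE :
  Winv B = 1%:M - normadj + (dnorm1 B)^-1 *: (sqrtdeg *m sqrtdeg^T).
Proof. by rewrite /Winv -Dhalf_ones trmx_mul tr_diag_mx !mulmxA. Qed.

Lemma normadj_sym : B^T = B -> normadj^T = normadj.
Proof. by move=> B_sym; rewrite !trmx_mul tr_diag_mx B_sym mulmxA. Qed.

Hypothesis degv_gt0 : forall k, 0 < degv B k 0.

Lemma sqrt_degv_neq0 k : Num.sqrt (degv B k 0) != 0.
Proof. by rewrite sqrtr_eq0 -ltNge. Qed.

(* In these proofs, generalizing [degv B] keeps [mxE] from unfolding it. *)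
Lemma Dmhalf_Dhalf : Dmhalf B *m Dhalf B = 1%:M.
Proof.
rewrite mulmx_diag -diag_const_mx; congr diag_mx; apply/rowP => k.
by move: (sqrt_degv_neq0 k); move: (degv B) => d ?; rewrite !mxE mulVf.
Qed.

Lemma Dhalf_Dmhalf : Dhalf B *m Dmhalf B = 1%:M.
Proof.
rewrite mulmx_diag -diag_const_mx; congr diag_mx; apply/rowP => k.
by move: (sqrt_degv_neq0 k); move: (degv B) => d ?; rewrite !mxE mulfV.
Qed.

Lemma Dmhalf_Dmhalf : Dmhalf B *m Dmhalf B = Dinv B.
Proof.
rewrite mulmx_diag; congr diag_mx; apply/rowP => k.
move: (degv_gt0 k); move: (degv B) => d d_gt0.
by rewrite !mxE -invfM -expr2 sqr_sqrtr // ltW.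
Qed.

Lemma Dhalf_Dhalf : Dhalf B *m Dhalf B = Dmat B.
Proof.
rewrite mulmx_diag; congr diag_mx; apply/rowP => k.
move: (degv_gt0 k); move: (degv B) => d d_gt0.
by rewrite !mxE -expr2 sqr_sqrtr // ltW.
Qed.

Lemma Dmhalf_Dmat : Dmhalf B *m Dmat B = Dhalf B.
Proof. by rewrite -Dhalf_Dhalf mulmxA Dmhalf_Dhalf mul1mx. Qed.

Lemma Dmhalf_degv : Dmhalf B *m degv B = sqrtdeg.
Proof.
apply/colP => k; rewrite /sqrtdeg mul_diag_mx.
move: (degv_gt0 k) (sqrt_degv_neq0 k); move: (degv B) => d d_gt0 sqrt_neq0.
by rewrite !mxE -{2}(sqr_sqrtr (ltW d_gt0)) expr2 mulrA mulVf ?mul1r.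
Qed.

Lemma tr_sqrtdeg_sqrtdeg : sqrtdeg^T *m sqrtdeg = (dnorm1 B)%:M.
Proof.
rewrite [LHS]mx11_scalar /dnorm1 /sqrtdeg; congr (_ %:M).
move: degv_gt0; move: (degv B) => d d_gt0; rewrite !mxE.
by apply: eq_bigr => k _; rewrite !mxE -expr2 sqr_sqrtr // ltW.
Qed.

Lemma dnorm1_gt0 (k0 : 'I_n) : 0 < dnorm1 B.
Proof.
rewrite /dnorm1 (bigD1 k0) //=; apply: ltr_wpDr; last exact: degv_gt0.
by apply: sumr_ge0 => k _; apply: ltW.
Qed.

Lemma normadj_sqrtdeg : normadj *m sqrtdeg = sqrtdeg.
Proof.
rewrite /normadj -Dhalf_ones -!mulmxA (mulmxA (Dmhalf B) (Dhalf B)).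
by rewrite Dmhalf_Dhalf mul1mx -[B *m ones]/(degv B) Dmhalf_degv Dhalf_ones.
Qed.

Lemma Dinv_mul_similar : Dinv B *m B = Dmhalf B *m normadj *m Dhalf B.
Proof.
by rewrite /normadj !mulmxA Dmhalf_Dmhalf -!mulmxA Dmhalf_Dhalf mulmx1.
Qed.

Lemma Winv_sqrtdeg (k0 : 'I_n) : Winv B *m sqrtdeg = sqrtdeg.
Proof.
rewrite WinvE mulmxDl mulmxBl mul1mx normadj_sqrtdeg subrr add0r.
rewrite -scalemxAl -mulmxA tr_sqrtdeg_sqrtdeg mul_mx_scalar scalerA.
by rewrite mulVf ?scale1r // gt_eqF ?(dnorm1_gt0 k0).
Qed.

End DegreeScaling.

Section ConnectedGraph.
Variables (R : rcfType) (n : nat) (B : 'M[R]_n).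
Hypotheses (B_sym : B^T = B) (B_ge0 : forall k l, 0 <= B k l).

Lemma harmonic_const_on_edges (z : 'I_n -> R) :
  (forall l, \sum_k B k l * (z l - z k) = 0) ->
  forall k l, 0 < B k l -> z k = z l.
Proof.
move=> harm.
have E1 : \sum_k \sum_l B k l * (z k - z l) * z k = 0.
  apply: big1 => k _; rewrite -mulr_suml.
  rewrite (eq_bigr (fun l => B l k * (z k - z l))) ?harm ?mul0r // => l _.
  by rewrite (trmx_sym_entry k l B_sym).
have E2 : \sum_k \sum_l B k l * (z k - z l) * z l = 0.
  rewrite exchange_big /=; apply: big1 => l _; rewrite -mulr_suml.
  rewrite (eq_bigr (fun k => - (B k l * (z l - z k)))) => [|k _].
    by rewrite sumrN harm oppr0 mul0r.
  by rewrite -mulrN opprB.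
have dirichlet : \sum_k \sum_l B k l * (z k - z l) ^+ 2 = 0.
  transitivity (\sum_k \sum_l B k l * (z k - z l) * z k
                - \sum_k \sum_l B k l * (z k - z l) * z l).
    rewrite -sumrB; apply: eq_bigr => k _; rewrite -sumrB.
    by apply: eq_bigr => l _; rewrite -mulrBr expr2 mulrA.
  by rewrite E1 E2 subrr.
have term_ge0 k l : 0 <= B k l * (z k - z l) ^+ 2.
  by apply: mulr_ge0 => //; apply: sqr_ge0.
have rows0 := psumr_eq0P (fun k _ => sumr_ge0 _ (fun l _ => term_ge0 k l)) dirichlet.
move=> k l Bkl_gt0.
have /eqP : B k l * (z k - z l) ^+ 2 = 0.
  exact: (psumr_eq0P (fun l _ => term_ge0 k l) (rows0 k isT)).
by rewrite mulf_eq0 gt_eqF //= sqrf_eq0 subr_eq0 => /eqP.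
Qed.

Hypothesis degv_gt0 : forall k, 0 < degv B k 0.
Hypothesis B_connected : connected_graph B.

Lemma connected_const (z : 'I_n -> R) :
  (forall k l, 0 < B k l -> z k = z l) -> forall k l, z k = z l.
Proof.
move=> z_edge k l; have /connectP [p kp ->] := B_connected k l.
by elim: p k kp => [|x p IHp] k //= /andP [/z_edge -> /IHp].
Qed.

Lemma normadj_left_fixed (k0 : 'I_n) (r : 'rV[R]_n) :
  r *m normadj B = r -> exists t, r = t *: (sqrtdeg B)^T.
Proof.
move=> rS; set z := r *m Dmhalf B.
have rE : r = z *m Dhalf B by rewrite /z -mulmxA Dmhalf_Dhalf ?mulmx1.
have zB : z *m B = r *m Dhalf B.
  by rewrite -[in RHS]rS /z /normadj -!mulmxA Dmhalf_Dhalf ?mulmx1.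
have zD : z *m Dmat B = r *m Dhalf B by rewrite /z -mulmxA Dmhalf_Dmat.
clearbody z.
have z_harm l : \sum_k B k l * (z 0 l - z 0 k) = 0.
  have e : \sum_k z 0 k * B k l = z 0 l * \sum_k B k l.
    move/rowP/(_ l): (etrans zB (esym zD)); rewrite mul_mx_diag !mxE => ->.
    congr (_ * _); apply: eq_bigr => k _.
    by rewrite mxE mulr1 (trmx_sym_entry l k B_sym).
  rewrite (eq_bigr (fun k => z 0 l * B k l - z 0 k * B k l)) => [|k _].
    by rewrite sumrB -mulr_sumr e subrr.
  by rewrite mulrBr ![B k l * _]mulrC.
exists (z 0 k0); rewrite rE; apply/rowP => k.
rewrite mul_mx_diag !mxE (connected_const (harmonic_const_on_edges z_harm) k k0).
by rewrite mulrC.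
Qed.

Lemma Winv_unit (k0 : 'I_n) : Winv B \in unitmx.
Proof.
rewrite unitmxE unitfE; apply/negP => /det0P [r r_neq0 rW].
have ry : r *m sqrtdeg B = 0.
  by rewrite -(Winv_sqrtdeg degv_gt0 k0) mulmxA rW mul0mx.
have /(normadj_left_fixed k0) [t rE] : r *m normadj B = r.
  move/eqP: rW; rewrite WinvE mulmxDr mulmxBr mulmx1 -scalemxAr.
  by rewrite (mulmxA r (sqrtdeg B)) ry mul0mx scaler0 addr0 subr_eq0 => /eqP.
move: ry; rewrite rE -scalemxAl tr_sqrtdeg_sqrtdeg // -scalemx1 scalerA.
move/matrixP/(_ 0 0); rewrite !mxE mulr1 => /eqP.
rewrite mulf_eq0 (gt_eqF (dnorm1_gt0 degv_gt0 k0)) orbF => /eqP t0.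
by move: r_neq0; rewrite rE t0 scale0r eqxx.
Qed.

End ConnectedGraph.

Lemma det_add_rank1 (T : comNzRingType) (m : nat) (N : 'M[T]_m) (p q : 'cV[T]_m)
    (mu : T) :
  N *m p = mu *: p -> q^T *m p = 1%:M ->
  \det (N + p *m q^T) * mu = (1 + mu) * \det N.
Proof.
(* Both factorizations compute the determinant of [[N, p], [-q^T, 1]]. *)
move=> Np qp.
have left_fact : block_mx N p (- q^T) (1%:M : 'M_1) *m block_mx 1%:M p 0 (- mu)%:M
    = block_mx N 0 (- q^T) (- (1 + mu))%:M.
  rewrite mulmx_block !mulmx1 !mulmx0 !addr0 Np mul_mx_scalar scaleNr subrr.
  rewrite mulNmx qp mul1mx; congr block_mx.
  by apply/matrixP => a b; rewrite !ord1 !mxE /= !mulr1n opprD.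
have right_fact : block_mx 1%:M (- p) 0 (1%:M : 'M_1) *m block_mx N p (- q^T) 1%:M
    = block_mx (N + p *m q^T) 0 (- q^T) (1%:M : 'M_1).
  by rewrite mulmx_block !mul1mx !mul0mx !add0r mulmxN mulNmx opprK mulmx1 subrr.
have /esym := congr1 determinant right_fact.
rewrite det_mulmx det_ublock det_lblock !det1 !mul1r mulr1 => det_block.
have := congr1 determinant left_fact.
rewrite det_mulmx det_lblock det_ublock det1 !mul1r !det_scalar1 det_block.
by rewrite mulrN mulrN => /oppr_inj ->; rewrite mulrC.
Qed.

Lemma char_poly_similar (T : comNzRingType) (m : nat) (U V X : 'M[T]_m) :
  U *m V = 1%:M -> char_poly (U *m X *m V) = char_poly X.
Proof.
move=> UV; rewrite /char_poly; have UVc : map_mx polyC U *m map_mx polyC V = 1%:M.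
  by rewrite -map_mxM UV map_mx1.
have -> : char_poly_mx (U *m X *m V)
    = map_mx polyC U *m char_poly_mx X *m map_mx polyC V.
  rewrite /char_poly_mx mulmxBr mulmxBl !map_mxM; congr (_ - _).
  by rewrite mul_mx_scalar -scalemxAl UVc -mul_scalar_mx mulmx1.
by rewrite !det_mulmx mulrAC -det_mulmx UVc det1 mul1r.
Qed.

Lemma char_poly_deflate (T : comNzRingType) (m : nat) (N : 'M[T]_m)
    (p q : 'cV[T]_m) :
  N *m p = p -> q^T *m p = 1%:M ->
  char_poly (N - p *m q^T) * ('X - 1) = 'X * char_poly N.
Proof.
move=> Np qp; rewrite /char_poly.
have -> : char_poly_mx (N - p *m q^T)
    = char_poly_mx N + map_mx polyC p *m (map_mx polyC q)^T.
  by rewrite /char_poly_mx map_mxB map_trmx -map_mxM opprD opprK addrA.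
rewrite det_add_rank1 ?(addrC 1) ?subrK //.
  by rewrite /char_poly_mx mulmxBl mul_scalar_mx -map_mxM Np scalerBl scale1r.
by rewrite map_trmx -map_mxM qp map_mx1.
Qed.

Lemma mulmx1_invmx (F : fieldType) (m : nat) (M X : 'M[F]_m) :
  M *m X = 1%:M -> invmx M = X.
Proof.
move=> MX; have [M_unit _] := mulmx1_unit MX.
by rewrite -[invmx M]mulmx1 -MX mulmxA mulVmx ?mul1mx.
Qed.

Section ShermanMorrison.
Variables (F : fieldType) (m : nat) (W0 : 'M[F]_m) (x : 'cV[F]_m) (a : F).
Hypotheses (W0_unit : W0 \in unitmx) (W1_unit : W0 - a *: (x *m x^T) \in unitmx).
Hypothesis x_neq0 : x != 0.

Local Notation W := (invmx W0).
Local Notation W1 := (invmx (W0 - a *: (x *m x^T))).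
Local Notation s := (1 - a * (x^T *m W *m x) 0 0).

Lemma update_mul_Wx : (W0 - a *: (x *m x^T)) *m (W *m x) = s *: x.
Proof.
rewrite mulmxBl mulmxA mulmxV // mul1mx -scalemxAl -[x *m x^T *m _]mulmxA.
by rewrite (mulmxA x^T) [X in x *m X]mx11_scalar mul_mx_scalar scalerA scalerBl scale1r.
Qed.

Lemma sherman_morrison_denom_neq0 : s != 0.
Proof.
apply/negP => /eqP s0; move/negP: x_neq0; apply.
have Wx0 : W *m x = 0.
  by rewrite -[W *m x](mulKmx W1_unit) update_mul_Wx s0 scale0r mulmx0.
by rewrite -[x](mulKVmx W0_unit) Wx0 mulmx0.
Qed.

Lemma sherman_morrison : W1 = W - (- s^-1 * a) *: (W *m x *m x^T *m W).
Proof.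
apply: mulmx1_invmx; rewrite mulNr scaleNr opprK mulmxDr -scalemxAr.
rewrite -[W *m x *m x^T *m W]mulmxA (mulmxA _ (W *m x)) update_mul_Wx.
rewrite -scalemxAl scalerA mulrAC mulVf ?sherman_morrison_denom_neq0 // mul1r.
by rewrite mulmxBl mulmxV // -scalemxAl !mulmxA subrK.
Qed.

Lemma mxtrace_sherman_morrison :
  \tr W1 - \tr W = a * (x^T *m W *m W1 *m x) 0 0.
Proof.
have s_neq0 := sherman_morrison_denom_neq0.
have trQ : \tr (W *m x *m x^T *m W) = (x^T *m W *m W *m x) 0 0.
  by rewrite -mulmxA mxtrace_mulC trace_mx11 !mulmxA.
have QE : (x^T *m W *m (W *m x *m x^T *m W) *m x) 0 0
    = (x^T *m W *m W *m x) 0 0 * (x^T *m W *m x) 0 0.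
  have -> : x^T *m W *m (W *m x *m x^T *m W) *m x
      = (x^T *m W *m W *m x) *m (x^T *m W *m x) by rewrite !mulmxA.
  by rewrite [LHS]mxE big_ord1.
rewrite sherman_morrison linearB linearZ /= trQ mulmxBr mulmxBl -scalemxAr.
rewrite -scalemxAl [fun_of_matrix (_ - _) 0 0]mxE [fun_of_matrix (- _) 0 0]mxE.
rewrite [fun_of_matrix (_ *: _) 0 0]mxE QE.
set t := (x^T *m W *m W *m x) 0 0; set k := (x^T *m W *m x) 0 0 in s_neq0 *.
by field.
Qed.

End ShermanMorrison.

Lemma mxtrace_resolvent_normal (C : numClosedFieldType) (m : nat) (M : 'M[C]_m)
    (zs : seq C) :
  M \is normalmx -> 1%:M - M \in unitmx ->
  char_poly M = \prod_(z <- zs) ('X - z%:P) ->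
  \tr (invmx (1%:M - M)) = \sum_(z <- zs) (1 - z)^-1.
Proof.
move=> /orthomx_spectralP M_spec unit_1M char_zs.
set U := spectralmx M in M_spec; set w := spectral_diag M in M_spec.
have U_unit : U \in unitmx := spectral_unit M.
have w_zs : perm_eq [seq w 0 k | k <- index_enum 'I_m] zs.
  apply: prod_XsubC_eq; rewrite big_map -char_zs [in RHS]M_spec.
  rewrite char_poly_similar ?mulVmx // char_poly_trig ?diag_mx_is_trig //.
  by apply: eq_bigr => k _; rewrite mxE eqxx mulr1n.
have resolvent_spec : 1%:M - M = invmx U *m diag_mx (\row_k (1 - w 0 k)) *m U.
  have -> : diag_mx (\row_k (1 - w 0 k)) = 1%:M - diag_mx w.
    by apply/matrixP => a b; rewrite !mxE mulrnBl.
  by rewrite mulmxBr mulmxBl mulmx1 mulVmx // -M_spec.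
have w_neq1 k : 1 - w 0 k != 0.
  move: unit_1M; rewrite resolvent_spec !unitmx_mul [diag_mx _ \in unitmx]unitmxE.
  rewrite det_diag unitfE.
  by case/andP => /andP [_ /prodf_neq0 /(_ k isT)]; rewrite mxE.
have inv_spec :
    invmx (1%:M - M) = invmx U *m diag_mx (\row_k (1 - w 0 k)^-1) *m U.
  apply: mulmx1_invmx; rewrite resolvent_spec !mulmxA mulmxK //.
  rewrite -(mulmxA (invmx U)) mulmx_diag.
  have -> : diag_mx (\row_k ((\row_k (1 - w 0 k)) 0 k * (\row_k (1 - w 0 k)^-1) 0 k))
      = 1%:M.
    by rewrite -diag_const_mx; congr diag_mx; apply/rowP => k; rewrite !mxE mulfV.
  by rewrite mulmx1 mulVmx.
rewrite inv_spec mxtrace_mulC mulmxA mulmxV // mul1mx mxtrace_diag.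
by rewrite -(perm_big _ w_zs) big_map; apply: eq_bigr => k _; rewrite mxE.
Qed.

(* [rem 1 zs] drops a single copy of 1, and [(1 - 1)^-1] is the junk value 0. *)
Lemma resolvent_sum_rem1 (F : fieldType) (zs : seq F) :
  \sum_(z <- rem 1 zs) (1 - z)^-1 = \sum_(z <- zs) (1 - z)^-1.
Proof.
have [z1|/rem_id -> //] := boolP (1 \in zs).
by rewrite [RHS](big_rem _ z1) /= subrr invr0 add0r.
Qed.

Section Complexify.
Variables (R : rcfType) (n : nat).

Lemma cmxE (Q : 'M[R]_n) : cmx Q = map_mx (real_complex R) Q.
Proof. by []. Qed.

Lemma mxtrace_cmx (Q : 'M[R]_n) : \tr (cmx Q) = (\tr Q)%:C%C.
Proof. by rewrite cmxE /mxtrace rmorph_sum; apply: eq_bigr => k _; rewrite mxE. Qed.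

Lemma char_poly_cmx (Q : 'M[R]_n) :
  char_poly (cmx Q) = \prod_(z <- eigenvalues Q) ('X - z%:P).
Proof.
rewrite /eigenvalues; case: closed_field_poly_normal => zs /= ->.
by rewrite (monicP (char_poly_monic _)) scale1r.
Qed.

Lemma cmx_sym_normal (Q : 'M[R]_n) : Q^T = Q -> cmx Q \is normalmx.
Proof.
move=> Q_sym; have Qc_adj : ((cmx Q)^t*)%sesqui = cmx Q.
  rewrite cmxE map_trmx Q_sym -map_mx_comp; apply: eq_map_mx => x /=.
  by apply: conj_Creal; rewrite complex_real.
by rewrite qualifE Qc_adj.
Qed.

End Complexify.

Section KemenyTrace.
Variables (R : rcfType) (n : nat) (B : 'M[R]_n).
Hypotheses (B_sym : B^T = B) (degv_gt0 : forall k, 0 < degv B k 0).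

Definition deflated_normadj : 'M[R]_n :=
  normadj B - (dnorm1 B)^-1 *: (sqrtdeg B *m (sqrtdeg B)^T).

Lemma Winv_deflated : Winv B = 1%:M - deflated_normadj.
Proof. by rewrite WinvE opprD opprK addrA. Qed.

Lemma deflated_normadj_sym : deflated_normadj^T = deflated_normadj.
Proof.
by rewrite linearB linearZ /= normadj_sym // trmx_mul trmxK.
Qed.

Lemma char_poly_deflated_normadj (k0 : 'I_n) :
  char_poly deflated_normadj * ('X - 1) = 'X * char_poly (Dinv B *m B).
Proof.
rewrite Dinv_mul_similar // char_poly_similar ?Dmhalf_Dhalf //.
have -> : deflated_normadj
    = normadj B - sqrtdeg B *m ((dnorm1 B)^-1 *: sqrtdeg B)^T.
  by rewrite linearZ /= -scalemxAr.
apply: char_poly_deflate; first exact: normadj_sqrtdeg.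
rewrite linearZ /= -scalemxAl tr_sqrtdeg_sqrtdeg // scale_scalar_mx mulVf //.
by rewrite gt_eqF ?(dnorm1_gt0 degv_gt0 k0).
Qed.

Lemma Kemeny_Winv (k0 : 'I_n) :
  Winv B \in unitmx -> Kemeny (Dinv B *m B) = (\tr (invmx (Winv B)) - 1)%:C%C.
Proof.
move=> W_unit.
have cmx_Winv : cmx (Winv B) = 1%:M - cmx deflated_normadj.
  by rewrite Winv_deflated !cmxE map_mxB map_mx1.
have eig_perm :
    perm_eq (1 :: eigenvalues deflated_normadj) (0 :: eigenvalues (Dinv B *m B)).
  apply: prod_XsubC_eq; rewrite !big_cons -!char_poly_cmx polyC0 subr0 polyC1.
  rewrite mulrC !cmxE -!map_char_poly -(map_polyX (real_complex R)) -rmorphM.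
  by rewrite -char_poly_deflated_normadj // rmorphM rmorphB /= map_polyX rmorph1.
have : \sum_(z <- 1 :: eigenvalues deflated_normadj) (1 - z)^-1
    = \sum_(z <- 0 :: eigenvalues (Dinv B *m B)) (1 - z)^-1 := perm_big _ eig_perm.
rewrite !big_cons subrr invr0 add0r subr0 invr1 => sum_eig.
rewrite /Kemeny resolvent_sum_rem1 -[LHS](addKr 1) -sum_eig addrC.
rewrite -(mxtrace_resolvent_normal (cmx_sym_normal deflated_normadj_sym) _
  (char_poly_cmx _)); last by rewrite -cmx_Winv cmxE map_unitmx.
by rewrite -cmx_Winv cmxE -map_invmx -cmxE mxtrace_cmx rmorphB rmorph1.
Qed.

End KemenyTrace.

Section EdgeVector.
Variables (R : rcfType) (n : nat) (i j : 'I_n).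

Local Notation v := (evec i j : 'cV[R]_n).

Lemma tr_evec_ones : v^T *m ones = 0.
Proof.
have sum_ind (p : 'I_n) : \sum_k ((k == p)%:R : R) = 1.
  by rewrite (bigD1 p) //= eqxx big1 ?addr0 // => k /negbTE ->.
apply/rowP => a; rewrite !mxE (eq_bigr (fun k => (k == i)%:R - (k == j)%:R)).
  by rewrite sumrB !sum_ind subrr.
by move=> k _; rewrite !mxE mulr1.
Qed.

Hypothesis i_neq_j : i != j.

Let not_both (k : 'I_n) : ~~ ((k == i) && (k == j)).
Proof. by apply/andP => -[/eqP -> /eqP ij]; move: i_neq_j; rewrite ij eqxx. Qed.

Lemma evec_mul_edge k l : ((k == i) && (l == j)) || ((k == j) && (l == i)) ->
  v k 0 * v l 0 = -1.
Proof.
rewrite !mxE; move: (not_both k) (not_both l).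
by case: (k == i); case: (k == j); case: (l == i); case: (l == j);
  rewrite //= ?subr0 ?sub0r ?mulr1 ?mul1r ?mulrN1 ?mulN1r.
Qed.

Lemma evec_mul_ge0 k l :
  ~~ (((k == i) && (l == j)) || ((k == j) && (l == i))) -> 0 <= v k 0 * v l 0.
Proof.
rewrite !mxE; move: (not_both k) (not_both l).
by case: (k == i); case: (k == j); case: (l == i); case: (l == j);
  rewrite //= ?subr0 ?sub0r ?mulrNN ?mulr1 ?mul1r ?mulr0 ?mul0r ?ler01 ?lexx.
Qed.

End EdgeVector.

Section EdgeDeletion.
Variables (R : rcfType) (n : nat) (A : 'M[R]_n) (i j : 'I_n).

Local Notation v := (evec i j : 'cV[R]_n).

Definition del_edge_mx : 'M[R]_n := A + A i j *: (v *m v^T).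

Lemma del_edge_mxE k l : del_edge_mx k l = A k l + A i j * (v k 0 * v l 0).
Proof. by rewrite !mxE big_ord1 !mxE. Qed.

Lemma degv_del_edge_mx : degv del_edge_mx = degv A.
Proof.
by rewrite /degv mulmxDl -scalemxAl -mulmxA tr_evec_ones mulmx0 scaler0 addr0.
Qed.

Lemma What_invE : What_inv A i j = Winv del_edge_mx.
Proof.
rewrite /What_inv /Winv /Dmhalf /Dhalf /dnorm1 degv_del_edge_mx.
by rewrite mulmxDr mulmxDl -scalemxAr -scalemxAl !mulmxA opprD addrA [LHS]addrAC.
Qed.

Lemma What_inv_rank1 :
  What_inv A i j = Winv A - A i j *: (Dmhalf A *m v *m (Dmhalf A *m v)^T).
Proof. by rewrite trmx_mul tr_diag_mx !mulmxA. Qed.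

Hypotheses (A_sym : A^T = A) (A_ge0 : forall k l, 0 <= A k l) (i_neq_j : i != j).

Lemma del_edge_mx_sym : del_edge_mx^T = del_edge_mx.
Proof.
apply/matrixP => k l; rewrite mxE !del_edge_mxE (trmx_sym_entry k l A_sym).
by rewrite [v l 0 * _]mulrC.
Qed.

Lemma del_edge_mx_ge0 k l : 0 <= del_edge_mx k l.
Proof.
rewrite del_edge_mxE.
have [edge|not_edge] := boolP (((k == i) && (l == j)) || ((k == j) && (l == i))).
  rewrite evec_mul_edge // mulrN1.
  case/orP: edge => /andP [/eqP -> /eqP ->]; first by rewrite subrr.
  by rewrite (trmx_sym_entry j i A_sym) subrr.
by rewrite addr_ge0 // mulr_ge0 // evec_mul_ge0.
Qed.

Hypothesis not_cut : ~ cut_edge A i j.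

Lemma connected_del_edge_mx : connected_graph del_edge_mx.
Proof.
have conn_del k l : connect (del_edge_rel A i j) k l.
  case: (boolP [forall k, forall l, connect (del_edge_rel A i j) k l]).
    by move=> /forallP /(_ k) /forallP.
  move=> /forallPn [k' /forallPn [l' /negP conn_kl]]; exfalso; apply: not_cut.
  by move=> all_conn; apply: conn_kl.
move=> k l; apply: connect_sub (conn_del k l) => x y /andP [A_xy_gt0 not_edge].
apply: connect1; rewrite /adjrel del_edge_mxE (lt_le_trans A_xy_gt0) // lerDl.
by rewrite mulr_ge0 ?evec_mul_ge0.
Qed.

Hypothesis degv_gt0 : forall k, 0 < degv A k 0.

Lemma degv_del_edge_mx_gt0 k : 0 < degv del_edge_mx k 0.
Proof. by rewrite degv_del_edge_mx. Qed.

Lemma What_inv_unit : What_inv A i j \in unitmx.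
Proof.
rewrite What_invE; apply: (Winv_unit _ _ degv_del_edge_mx_gt0 _ i).
- exact: del_edge_mx_sym.
- exact: del_edge_mx_ge0.
- exact: connected_del_edge_mx.
Qed.

Lemma Kemeny_del_edge_mx :
  Kemeny (Dinv A *m del_edge_mx) = (\tr (invmx (What_inv A i j)) - 1)%:C%C.
Proof.
have -> : Dinv A = Dinv del_edge_mx by rewrite /Dinv degv_del_edge_mx.
rewrite What_invE (Kemeny_Winv _ degv_del_edge_mx_gt0 i) ?del_edge_mx_sym //.
by rewrite -What_invE What_inv_unit.
Qed.

Lemma Dmhalf_evec_neq0 : Dmhalf A *m v != 0.
Proof.
apply/eqP => x0; have /colP/(_ i) : v = Dhalf A *m (Dmhalf A *m v).
  by rewrite mulmxA Dhalf_Dmhalf // mul1mx.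
by rewrite x0 mulmx0 !mxE eqxx (negbTE i_neq_j) subr0 => /eqP; rewrite oner_eq0.
Qed.

End EdgeDeletion.

Theorem theorem9 (R : rcfType) (n : nat) (A : 'M[R]_n) (i j : 'I_n) :
  A^T = A ->
  (forall k l, 0 <= A k l) ->
  (forall k, 0 < degv A k 0) ->
  connected_graph A ->
  i != j -> 0 < A i j -> ~ cut_edge A i j ->
  let v := evec i j in
  let a := A i j in
  let P := Dinv A *m A in
  let Ahat := A + a *: (v *m v^T) in
  let Phat := Dinv A *m Ahat in
  let W := invmx (Winv A) in
  let What := invmx (What_inv A i j) in
  let s := 1 - a * (v^T *m Dmhalf A *m W *m Dmhalf A *m v) 0 0 in
  let tau := - s^-1 in
  [/\ Winv A \in unitmx, What_inv A i j \in unitmx,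
      Kemeny Phat - Kemeny P
        = Complex (a * (v^T *m Dmhalf A *m W *m What *m Dmhalf A *m v) 0 0) 0,
      s != 0 &
      What = W - (tau * a) *: (W *m Dmhalf A *m v *m v^T *m Dmhalf A *m W)].
Proof.
move=> A_sym A_ge0 degv_gt0 A_conn i_neq_j _ not_cut v a P Ahat Phat W What s tau.
have W_unit : Winv A \in unitmx := Winv_unit A_sym A_ge0 degv_gt0 A_conn i.
have What_unit := What_inv_unit A_sym A_ge0 i_neq_j not_cut degv_gt0.
have What_unit_rank1 := What_unit; rewrite What_inv_rank1 in What_unit_rank1.
have x_neq0 := Dmhalf_evec_neq0 i_neq_j degv_gt0.
have s_neq0 := sherman_morrison_denom_neq0 W_unit What_unit_rank1 x_neq0.
have What_formula := sherman_morrison W_unit What_unit_rank1 x_neq0.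
have tr_diff := mxtrace_sherman_morrison W_unit What_unit_rank1 x_neq0.
rewrite -What_inv_rank1 -/What in What_formula tr_diff.
rewrite trmx_mul tr_diag_mx !mulmxA in s_neq0 What_formula tr_diff.
split => //.
rewrite Kemeny_del_edge_mx // (Kemeny_Winv A_sym degv_gt0 i W_unit).
by rewrite -rmorphB opprB addrA subrK tr_diff.
Qed.
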